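(* Let $T$ be the triangle, a linear map $1\to1$ with matrix $\begin{pmatrix}1&1\\0&1\end{pmatrix}$. For $\lambda\in\mathbb{Z}[\tfrac12]$ with $\lambda\ge0$, let $L_\lambda$ be the lambda box, a linear map $1\to1$ with matrix $\begin{pmatrix}1&0\\0&\lambda\end{pmatrix}$. Then $T$ is expressible by a diagram of the $\frac{\pi}{4}$-fragment ZX-calculus, that is, there is such a diagram whose standard interpretation equals the matrix of $T$. Likewise, for every $\lambda\in\mathbb{Z}[\tfrac12]$ with $\lambda\ge 0$, $L_\lambda$ is expressible by a diagram of the $\frac{\pi}{4}$-fragment ZX-calculus.
   Context: The $\frac{\pi}{4}$-fragment ZX-calculus is built as follows. Its diagrams are generated from the generators below, using sequential composition $\circ$ and parallel composition (tensor) $\otimes$. The generators and their standard interpretations $\llbracket\cdot\rrbracket$ as complex matrices are: - the green spider $R_Z^{(n,m)}:n\to m$, with $\llbracket R_Z^{(n,m)}\rrbracket=|0\rangle^{\otimes m}\langle 0|^{\otimes n}+|1\rangle^{\otimes m}\langle 1|^{\otimes n}$; - the green phase $A_\alpha:1\to1$ for $\alpha\in\{\frac{k\pi}{4}:k=0,\dots,7\}$, with $\llbracket A_\alpha\rrbracket=|0\rangle\langle0|+e^{i\alpha}|1\rangle\langle1|$; - the Hadamard gate $H:1\to 1$, with $\llbracket H\rrbracket=\frac1{\sqrt2}\begin{pmatrix}1&1\\1&-1\end{pmatrix}$; - the swap $2\to2$; - the identity $1\to1$; - the empty diagram $0\to0$, interpreted as the scalar $1$; - the cap $0\to2$, with interpretation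 $|00\rangle+|11\rangle$; - the cup $2\to0$, with interpretation $\langle00|+\langle11|$. The interpretation is extended by matrix product for $\circ$ and Kronecker product for $\otimes$. The triangle and the lambda box are not among these generators. *)

From HB Require Import structures.
From mathcomp Require Import all_boot all_order all_algebra all_field.
Set Implicit Arguments. Unset Strict Implicit. Unset Printing Implicit Defensive.
Import Order.TTheory GRing.Theory Num.Theory.
Local Open Scope ring_scope.

(* Diagrams of the pi/4-fragment ZX-calculus, typed by (inputs, outputs). *)
Inductive zx : nat -> nat -> Type :=
| ZSpider (n m : nat) : zx n m
| ZPhase (k : 'I_8) : zx 1 1
| ZHad : zx 1 1
| ZSwap : zx 2 2
| ZId : zx 1 1
| ZEmpty : zx 0 0
| ZCap : zx 0 2
| ZCup : zx 2 0
| ZComp (n m p : nat) : zx m p -> zx n m -> zx n p      (* ZComp d2 d1 = d2 o d1 *)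
| ZTens (n1 m1 n2 m2 : nat) : zx n1 m1 -> zx n2 m2 -> zx (n1 + n2) (m1 + m2).

(* entry of a matrix at natural indices, 0 outside the range *)
Definition mget (p q : nat) (A : 'M[algC]_(p, q)) (r c : nat) : algC :=
  match @insub nat (fun x => x < p)%N 'I_p r, @insub nat (fun x => x < q)%N 'I_q c with
  | Some i, Some j => A i j
  | _, _ => 0
  end.

(* Kronecker product, standard (big-endian) convention *)
Definition kron (p1 q1 p2 q2 : nat) (A : 'M[algC]_(p1, q1)) (B : 'M[algC]_(p2, q2))
  : 'M[algC]_(p1 * p2, q1 * q2) :=
  \matrix_(i, j) (mget A (i %/ p2) (j %/ q2) * mget B (i %% p2) (j %% q2)).

(* e^{i pi/4} *)
Definition omega8 : algC := (1 + 'i) / sqrtC 2.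

Definition spider_mx (n m : nat) : 'M[algC]_(2 ^ m, 2 ^ n) :=
  \matrix_(i, j) (((i == 0%N :> nat) && (j == 0%N :> nat))%:R
                + ((i == (2 ^ m).-1 :> nat) && (j == (2 ^ n).-1 :> nat))%:R).

Definition phase_mx (k : 'I_8) : 'M[algC]_(2 ^ 1, 2 ^ 1) :=
  \matrix_(i, j) (if (i == j :> nat) then (if (i == 0%N :> nat) then 1 else omega8 ^+ k) else 0).

Definition had_mx : 'M[algC]_(2 ^ 1, 2 ^ 1) :=
  \matrix_(i, j) ((sqrtC 2)^-1 * (if ((i == 1%N :> nat) && (j == 1%N :> nat)) then -1 else 1)).

Definition swap_mx : 'M[algC]_(2 ^ 2, 2 ^ 2) :=
  \matrix_(i, j) (((i == j :> nat) && ((i == 0%N :> nat) || (i == 3%N :> nat)))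
                  || ((i == 1%N :> nat) && (j == 2%N :> nat))
                  || ((i == 2%N :> nat) && (j == 1%N :> nat)))%:R.

Definition id_mx1 : 'M[algC]_(2 ^ 1, 2 ^ 1) := 1%:M.

Definition empty_mx : 'M[algC]_(2 ^ 0, 2 ^ 0) := 1%:M.

Definition cap_mx : 'M[algC]_(2 ^ 2, 2 ^ 0) :=
  \matrix_(i, j) ((i == 0%N :> nat) || (i == 3%N :> nat))%:R.

Definition cup_mx : 'M[algC]_(2 ^ 0, 2 ^ 2) :=
  \matrix_(i, j) ((j == 0%N :> nat) || (j == 3%N :> nat))%:R.

Fixpoint interp (n m : nat) (d : zx n m) : 'M[algC]_(2 ^ m, 2 ^ n) :=
  match d in zx n m return 'M[algC]_(2 ^ m, 2 ^ n) with
  | ZSpider n m => spider_mx n m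
  | ZPhase k => phase_mx k
  | ZHad => had_mx
  | ZSwap => swap_mx
  | ZId => id_mx1
  | ZEmpty => empty_mx
  | ZCap => cap_mx
  | ZCup => cup_mx
  | ZComp _ _ _ d2 d1 => interp d2 *m interp d1
  | ZTens n1 m1 n2 m2 d1 d2 =>
      castmx (esym (expnD 2 m1 m2), esym (expnD 2 n1 n2)) (kron (interp d1) (interp d2))
  end.

Definition triangle_mx : 'M[algC]_(2 ^ 1, 2 ^ 1) :=
  \matrix_(i, j) (if ((i == 1%N :> nat) && (j == 0%N :> nat)) then 0 else 1).

Definition lambda_mx (l : algC) : 'M[algC]_(2 ^ 1, 2 ^ 1) :=
  \matrix_(i, j) (if (i == j :> nat) then (if (i == 0%N :> nat) then 1 else l) else 0).

Definition dyadic (l : algC) : Prop := exists (a : int) (k : nat), l = a%:~R / 2 ^+ k.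

(* All matrices involved are 2x2 with entries in Q(w), w = e^(i pi/4), where
   sqrt 2 = w - w^3; every identity below is therefore a field identity modulo
   w^4 = -1.  The only source of non-unitary maps is one gadget: copying the wire
   with a green spider and closing the copy with Z(1,0) o U yields the diagonal
   matrix of the column sums of U.  Products of such diagonals, phases and
   Hadamards give the triangle T; the column sums of Z T^(n+1) give diag(1, n),
   a swapped diag(1, 2) rescaled by 1/2 gives diag(1, 1/2), and
   diag(1, n / 2^k) = diag(1, n) diag(1, 1/2)^k. *)
From HB Require Import structures.
From mathcomp Require Import all_boot all_order all_algebra all_field.
From mathcomp Require Import ring.

Set Implicit Arguments.
Unset Strict Implicit.
Unset Printing Implicit Defensive.

Import Order.TTheory GRing.Theory Num.Theory.
Local Open Scope ring_scope.

Local Notation w := omega8.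

Lemma sqr_omega8 : w ^+ 2 = 'i.
Proof. by rewrite /omega8 expr_div_n sqrtCK sqrrD sqrCi expr1n; field. Qed.

Lemma omega8_pow4 : w ^+ 4 = -1.
Proof. by rewrite (exprM w 2 2) sqr_omega8 sqrCi. Qed.

Lemma omega8_pow8 : w ^+ 8 = 1.
Proof. by rewrite (exprM w 4 2) omega8_pow4 sqrrN expr1n. Qed.

Lemma sqrtC2_neq0 : sqrtC 2 != 0 :> algC.
Proof. by rewrite sqrtC_eq0 pnatr_eq0. Qed.

Lemma sqrtC2E : sqrtC 2 = w - w ^+ 3.
Proof.
rewrite exprS sqr_omega8 /omega8.
apply: (mulfI sqrtC2_neq0); rewrite -expr2 sqrtCK.
by field: (sqrCi algC); rewrite sqrtC2_neq0.
Qed.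

Lemma invsqrtC2E : (sqrtC 2)^-1 = (w - w ^+ 3) / 2.
Proof.
apply: (mulfI sqrtC2_neq0); rewrite divff ?sqrtC2_neq0 // mulrA -{1}sqrtC2E.
by rewrite -expr2 sqrtCK divff // pnatr_eq0.
Qed.

Ltac omega8_field := rewrite ?invsqrtC2E ?sqrtC2E; field: omega8_pow4.

Definition mx2 (a b c d : algC) : 'M[algC]_(2 ^ 1, 2 ^ 1) :=
  \matrix_(i, j) if i == 0 :> nat then (if j == 0 :> nat then a else b)
                 else (if j == 0 :> nat then c else d).

Lemma mx2E (A : 'M[algC]_(2 ^ 1, 2 ^ 1)) :
  A = mx2 (A ord0 ord0) (A ord0 ord_max) (A ord_max ord0) (A ord_max ord_max).
Proof.
apply/matrixP => -[[|[|i]] Hi] [[|[|j]] Hj]; rewrite !mxE //=.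
all: by congr (A _ _); apply: val_inj.
Qed.

Lemma mx2_mul a b c d a' b' c' d' :
  mx2 a b c d *m mx2 a' b' c' d' =
  mx2 (a * a' + b * c') (a * b' + b * d') (c * a' + d * c') (c * b' + d * d').
Proof.
apply/matrixP => i j; rewrite !mxE !big_ord_recl big_ord0 !mxE addr0.
by case: i => [[|[|i]] Hi]; case: j => [[|[|j]] Hj].
Qed.

Lemma colsum_mx2 a b c d :
  diag_mx (const_mx 1 *m mx2 a b c d) = mx2 (a + c) 0 0 (b + d).
Proof.
apply/matrixP => -[[|[|i]] Hi] [[|[|j]] Hj]; rewrite !mxE //=.
all: by rewrite !big_ord_recl big_ord0 !mxE /=; ring.
Qed.

Lemma triangle_mxE : triangle_mx = mx2 1 1 0 1.
Proof. by apply/matrixP => -[[|[|i]] Hi] [[|[|j]] Hj]; rewrite !mxE. Qed.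

Lemma lambda_mxE l : lambda_mx l = mx2 1 0 0 l.
Proof. by apply/matrixP => -[[|[|i]] Hi] [[|[|j]] Hj]; rewrite !mxE. Qed.

Definition phase (k : nat) : zx 1 1 := ZPhase (inZp k).

Lemma interp_phase k : interp (phase k) = mx2 1 0 0 (w ^+ k).
Proof.
apply/matrixP => -[[|[|i]] Hi] [[|[|j]] Hj]; rewrite !mxE //=.
by rewrite expr_mod // omega8_pow8.
Qed.

Lemma interp_had : interp ZHad =
  mx2 (sqrtC 2)^-1 (sqrtC 2)^-1 (sqrtC 2)^-1 (- (sqrtC 2)^-1).
Proof.
by apply/matrixP => -[[|[|i]] Hi] [[|[|j]] Hj]; rewrite !mxE /= ?mulr1 ?mulrN1.
Qed.

Lemma interp_id : interp ZId = mx2 1 0 0 1.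
Proof. by apply/matrixP => -[[|[|i]] Hi] [[|[|j]] Hj]; rewrite !mxE. Qed.

Lemma interp_comp n m p (d2 : zx m p) (d1 : zx n m) :
  interp (ZComp d2 d1) = interp d2 *m interp d1.
Proof. by []. Qed.

HB.lock Definition colsum_diag (U : zx 1 1) : zx 1 1 :=
  ZComp (ZTens ZId (ZComp (ZSpider 1 0) U)) (ZSpider 1 2).

Lemma mget_nat p q (A : 'M[algC]_(p, q)) r c (lt_rp : (r < p)%N) (lt_cq : (c < q)%N) :
  mget A r c = A (Ordinal lt_rp) (Ordinal lt_cq).
Proof. by rewrite /mget !insubT. Qed.

(* The Kronecker product reaches [mget] with closed index terms built from
   [%/], [%%] and [bump], which [simpl] does not evaluate. *)
Ltac eval_mget :=
  repeat match goal with |- context [@mget ?p ?q ?A ?r ?c] =>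
    let r' := eval vm_compute in r in let c' := eval vm_compute in c in
    rewrite -[r]/r' -[c]/c' (@mget_nat p q A r' c' isT isT) end.

Lemma interp_colsum_diag U :
  interp (colsum_diag U) = diag_mx (const_mx 1 *m interp U).
Proof.
rewrite colsum_diag.unlock /= [interp U]mx2E colsum_mx2.
move: (interp U _ _) (interp U _ _) (interp U _ _) (interp U _ _) => a b c d.
apply/matrixP => i j; rewrite !mxE !big_ord_recl !big_ord0 !castmxE !mxE.
case: i => [[|[|i]] Hi]; case: j => [[|[|j]] Hj] //=; eval_mget.
all: by rewrite !mxE !big_ord_recl !big_ord0 !mxE /=; ring.
Qed.

Definition not_gate : zx 1 1 := ZComp ZHad (ZComp (phase 4) ZHad).

Lemma interp_not_gate : interp not_gate = mx2 0 1 1 0.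
Proof.
rewrite !interp_comp interp_phase interp_had !mx2_mul.
by congr mx2; omega8_field.
Qed.

Definition det_scalar (d : zx 1 1) : zx 1 1 :=
  ZComp d (ZComp not_gate (ZComp d not_gate)).

Lemma interp_det_scalar d a b : interp d = mx2 a 0 0 b ->
  interp (det_scalar d) = mx2 (a * b) 0 0 (a * b).
Proof.
move=> dE; rewrite !(interp_not_gate, interp_comp) dE !mx2_mul.
by congr mx2; ring.
Qed.

Definition had_diag (k : nat) : zx 1 1 := colsum_diag (ZComp (phase k) ZHad).

Lemma interp_had_diag k :
  interp (had_diag k) = mx2 ((1 + w ^+ k) / sqrtC 2) 0 0 ((1 - w ^+ k) / sqrtC 2).
Proof.
rewrite interp_colsum_diag interp_comp interp_phase interp_had mx2_mul colsum_mx2.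
by congr mx2; ring.
Qed.

Definition sqrt2_diag : zx 1 1 :=
  colsum_diag (ZComp (had_diag 5) (ZComp (had_diag 3) ZHad)).

Lemma interp_sqrt2_diag : interp sqrt2_diag = mx2 (sqrtC 2) 0 0 (-1).
Proof.
rewrite interp_colsum_diag !(interp_had_diag, interp_had, interp_comp).
by rewrite !mx2_mul colsum_mx2; congr mx2; omega8_field.
Qed.

(* For every c, diag(1,a) H diag(1,b) H diag(1,c) H diag(1,d) is a multiple of
   the triangle when a = -(1+c^2)/(2c), b = (1+c)/(1-c), d = (1-c^2)/(1+c^2).
   For c = w this is a = -1/sqrt 2, b = (1+w)/(1-w), d = w^6, realized up to
   scalars by [sqrt2_diag], [had_diag 5] and [phase 6]; the product is then
   w^-1 T, which [det_scalar (phase 1)] = w I corrects. *)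
Definition triangle : zx 1 1 :=
  ZComp (det_scalar (phase 1)) (ZComp sqrt2_diag (ZComp ZHad (ZComp (had_diag 5)
    (ZComp ZHad (ZComp (phase 1) (ZComp ZHad (phase 6))))))).

Lemma interp_triangle : interp triangle = mx2 1 1 0 1.
Proof.
rewrite interp_comp (interp_det_scalar (interp_phase 1)).
rewrite !(interp_sqrt2_diag, interp_had_diag, interp_phase, interp_had, interp_comp).
by rewrite !mx2_mul; congr mx2; omega8_field.
Qed.

Fixpoint zx_pow (d : zx 1 1) (n : nat) : zx 1 1 :=
  if n is n'.+1 then ZComp d (zx_pow d n') else ZId.

Lemma interp_triangle_pow n : interp (zx_pow triangle n) = mx2 1 n%:R 0 1.
Proof.
elim: n => [|n IHn]; first exact: interp_id.
by rewrite interp_comp interp_triangle IHn mx2_mul; congr mx2; ring.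
Qed.

Lemma interp_diag_pow d x n : interp d = mx2 1 0 0 x ->
  interp (zx_pow d n) = mx2 1 0 0 (x ^+ n).
Proof.
move=> dE; elim: n => [|n IHn]; first exact: interp_id.
by rewrite interp_comp dE IHn mx2_mul exprS; congr mx2; ring.
Qed.

Definition nat_diag (n : nat) : zx 1 1 :=
  colsum_diag (ZComp (phase 4) (zx_pow triangle n.+1)).

Lemma interp_nat_diag n : interp (nat_diag n) = mx2 1 0 0 n%:R.
Proof.
rewrite interp_colsum_diag interp_comp interp_phase interp_triangle_pow.
by rewrite mx2_mul colsum_mx2 omega8_pow4; congr mx2; ring.
Qed.

Definition half_diag : zx 1 1 :=
  ZComp (det_scalar (ZComp (had_diag 1) (had_diag 7)))
        (ZComp not_gate (ZComp (nat_diag 2) not_gate)).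

Lemma interp_half_diag : interp half_diag = mx2 1 0 0 2^-1.
Proof.
have diag17 : interp (ZComp (had_diag 1) (had_diag 7)) =
              mx2 ((2 + sqrtC 2) / 2) 0 0 ((2 - sqrtC 2) / 2).
  by rewrite interp_comp !interp_had_diag mx2_mul; congr mx2; omega8_field.
rewrite interp_comp (interp_det_scalar diag17).
rewrite !(interp_nat_diag, interp_not_gate, interp_comp) !mx2_mul.
by congr mx2; omega8_field.
Qed.

Theorem mainTheorem2 :
  (exists d : zx 1 1, interp d = triangle_mx) /\
  (forall l : algC, dyadic l -> 0 <= l -> exists d : zx 1 1, interp d = lambda_mx l).
Proof.
split; first by exists triangle; rewrite interp_triangle triangle_mxE.
move=> _ [a [k ->]]; rewrite pmulr_lge0 ?invr_gt0 ?exprn_gt0 // ler0z.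
case: a => // n _.
exists (ZComp (nat_diag n) (zx_pow half_diag k)).
rewrite lambda_mxE interp_comp interp_nat_diag (interp_diag_pow k interp_half_diag).
by rewrite mx2_mul exprVn; congr mx2; ring.
Qed.
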